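(* Let $M=(\mathbf a,\mathbf p,0)$ be a TFM that is U-DSIC and 1-SCP, let $\theta_i:[0,1]^n\to\mathbb R$ ($i=1,\dots,n$) be functions, let $\tilde r:[0,1]^n\to\mathbb R$ be arbitrary, and define $\tilde M=(\mathbf a,\tilde{\mathbf p},\tilde r)$ by $\tilde p_i(b_i,\mathbf b_{-i})=p_i(b_i,\mathbf b_{-i})+\frac{\theta_i(b_i,\mathbf b_{-i})}{a_i(b_i,\mathbf b_{-i})}$. If for every $i$ and every $b_i$, \[\mathbb E_{\mathbf b_{-i}\sim V_{-i}}[\theta_i(b_i,\mathbf b_{-i})]=0,\] then $\tilde M$ is U-BNIC.
   Context: Users' valuations are drawn from a distribution $V$; $V_{-i}$ denotes the distribution of the other users' valuations (given $v_i$). A TFM $(\mathbf a,\mathbf p,r)$ consists of allocation probabilities $\mathbf a$, payments-if-confirmed $\mathbf p$, and miner revenue $r$, all functions of the bid vector. User utility: $u_i(b_i,\mathbf b_{-i};v_i)=a_i(b_i,\mathbf b_{-i})(v_i-p_i(b_i,\mathbf b_{-i}))$. U-DSIC: for all $i,v_i,\mathbf b_{-i}$, $v_i\in\arg\max_{b_i}u_i(b_i,\mathbf b_{-i};v_i)$. U-BNIC: for all $i,v_i$, $v_i\in\arg\max_{b_i}\mathbb E_{\mathbf b_{-i}\sim V_{-i}}[u_i(b_i,\mathbf b_{-i};v_i)]$ (others bidding truthfully). 1-SCP: for all $i,v_i,\mathbf b_{-i}$, $v_i\in\arg\max_{b_i}[u_i(b_i,\mathbf b_{-i};v_i)+r(b_i,\mathbf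 b_{-i})]$. *)

From HB Require Import structures.
From mathcomp Require Import all_boot all_order all_algebra.
From mathcomp Require Import all_classical all_reals all_analysis.
Set Implicit Arguments. Unset Strict Implicit. Unset Printing Implicit Defensive.
Import Order.TTheory GRing.Theory Num.Theory.
Local Open Scope ring_scope.

Section TFM.
Variables (R : realType) (n : nat).

Definition unitI (x : R) : Prop := 0 <= x <= 1.
Definition in_cube (b : 'I_n -> R) : Prop := forall j, unitI (b j).

(* (b_i, b_{-i}) : replace coordinate i of b by x *)
Definition upd (b : 'I_n -> R) (i : 'I_n) (x : R) : 'I_n -> R :=
  fun j => if j == i then x else b j.

(* A TFM (a, p, r): allocation probabilities, payments-if-confirmed, miner revenue *)
Record tfm := TFM {
  alloc : 'I_n -> ('I_n -> R) -> R;
  pay   : 'I_n -> ('I_n -> R) -> R;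
  rev   : ('I_n -> R) -> R }.

Definition util (M : tfm) (i : 'I_n) (b : 'I_n -> R) (v : R) : R :=
  alloc M i b * (v - pay M i b).

Definition UDSIC (M : tfm) : Prop :=
  forall (i : 'I_n) (vi bi : R) (b : 'I_n -> R),
    unitI vi -> unitI bi -> in_cube b ->
    util M i (upd b i bi) vi <= util M i (upd b i vi) vi.

Definition SCP1 (M : tfm) : Prop :=
  forall (i : 'I_n) (vi bi : R) (b : 'I_n -> R),
    unitI vi -> unitI bi -> in_cube b ->
    util M i (upd b i bi) vi + rev M (upd b i bi)
      <= util M i (upd b i vi) vi + rev M (upd b i vi).

(* V_{-i} given v_i: the law of the others' valuations [X i] under the
   probability [P i vi] on an abstract sample space T (coordinate i of
   [X i w] is ignored). *)
Definition UBNIC d (T : measurableType d) (P : 'I_n -> R -> probability T R)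
    (X : 'I_n -> T -> 'I_n -> R) (M : tfm) : Prop :=
  forall (i : 'I_n) (vi bi : R), unitI vi -> unitI bi ->
    (\int[P i vi]_w (util M i (upd (X i w) i bi) vi)%:E
      <= \int[P i vi]_w (util M i (upd (X i w) i vi) vi)%:E)%E.

End TFM.

(** Adding [theta_i / a_i] to the payment lowers the utility
    [a_i (v_i - p_i)] by exactly [theta_i], so the expected utility of
    every bid under [M~] is that under [M] minus the mean of [theta_i],
    which is zero.  Since U-DSIC makes truthful bidding optimal for every
    realisation of the other bids, it is optimal in expectation, for [M]
    and hence for [M~]. *)
From HB Require Import structures.
From mathcomp Require Import all_boot all_order all_algebra.
From mathcomp Require Import all_classical all_reals all_analysis.
Import Order.TTheory GRing.Theory Num.Theory.
Local Open Scope ring_scope.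

Section TransactionFeeMechanisms.
Context {R : realType} {n : nat}.

Lemma in_cube_upd {b : 'I_n -> R} (i : 'I_n) {x : R} :
  in_cube b -> unitI x -> in_cube (upd b i x).
Proof. by move=> bc xu j; rewrite /upd; case: ifP. Qed.

Lemma util_shift_pay (a p theta : 'I_n -> ('I_n -> R) -> R)
    (r r0 : ('I_n -> R) -> R) (i : 'I_n) (b : 'I_n -> R) (v : R) :
  (a i b = 0 -> theta i b = 0) ->
  util (TFM a (fun i b => p i b + theta i b / a i b) r) i b v
    = util (TFM a p r0) i b v - theta i b.
Proof.
rewrite /util /=; have [a0 /(_ a0) -> | a_neq0 _] := eqVneq (a i b) 0.
  by rewrite a0 !mul0r subr0.
by rewrite opprD addrA mulrBr mulrCA mulfV // mulr1.
Qed.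

Section Integrals.
Context {d : measure_display} {T : measurableType d}.

Lemma integralB_mean0 (mu : {measure set T -> \bar R}) {f g : T -> R} :
  mu.-integrable setT (EFin \o f) -> mu.-integrable setT (EFin \o g) ->
  (\int[mu]_w (g w)%:E = 0)%E ->
  (\int[mu]_w (f w - g w)%:E = \int[mu]_w (f w)%:E)%E.
Proof.
by move=> fint gint g0; rewrite integralB_EFin // g0 sube0.
Qed.

Lemma UDSIC_UBNIC (P : 'I_n -> R -> probability T R)
    (X : 'I_n -> T -> 'I_n -> R) {M : tfm R n} :
  (forall i w, in_cube (X i w)) ->
  (forall i vi bi, unitI vi -> unitI bi ->
     (P i vi).-integrable setT (fun w => (util M i (upd (X i w) i bi) vi)%:E)) ->
  UDSIC M -> UBNIC P X M.
Proof.
move=> Xc uint UD i vi bi vu bu.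
apply: le_integral => //; [exact: uint | exact: uint |].
by move=> w _; rewrite lee_fin; apply: UD.
Qed.

End Integrals.
End TransactionFeeMechanisms.

Theorem mainTheorem8 (R : realType) (n : nat) (d : measure_display)
  (T : measurableType d) (P : 'I_n -> R -> probability T R)
  (X : 'I_n -> T -> 'I_n -> R)
  (a p : 'I_n -> ('I_n -> R) -> R)
  (theta : 'I_n -> ('I_n -> R) -> R) (rt : ('I_n -> R) -> R) :
  (* the others' valuations lie in [0,1] *)
  (forall i w, in_cube (X i w)) ->
  (* allocation probabilities *)
  (forall i b, in_cube b -> 0 <= a i b <= 1) ->
  UDSIC (TFM a p (fun _ => 0)) ->
  SCP1 (TFM a p (fun _ => 0)) ->
  (* theta_i / a_i is well defined (0/0 read as 0) *)
  (forall i b, in_cube b -> a i b = 0 -> theta i b = 0) ->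
  (* the expectations involved exist *)
  (forall i vi bi, unitI vi -> unitI bi ->
     (P i vi).-integrable setT (fun w => (theta i (upd (X i w) i bi))%:E)) ->
  (forall i vi bi, unitI vi -> unitI bi ->
     (P i vi).-integrable setT
       (fun w => (util (TFM a p (fun _ => 0)) i (upd (X i w) i bi) vi)%:E)) ->
  (* E_{b_{-i} ~ V_{-i}} [theta_i(b_i, b_{-i})] = 0 *)
  (forall i vi bi, unitI vi -> unitI bi ->
     (\int[P i vi]_w (theta i (upd (X i w) i bi))%:E = 0)%E) ->
  UBNIC P X (TFM a (fun i b => p i b + theta i b / a i b) rt).
Proof.
move=> Xc _ UD _ theta0 theta_int util_int theta_mean0.
have BNIC := UDSIC_UBNIC P X Xc util_int UD.
have expected_util_eq i vi x : unitI vi -> unitI x ->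
  (\int[P i vi]_w (util (TFM a (fun i b => p i b + theta i b / a i b) rt)
                         i (upd (X i w) i x) vi)%:E
   = \int[P i vi]_w (util (TFM a p (fun _ => 0)) i (upd (X i w) i x) vi)%:E)%E.
  move=> vu xu.
  under eq_integral => w _.
    rewrite (util_shift_pay a p theta rt (fun _ => 0)); last first.
      exact: theta0 (in_cube_upd i (Xc i w) xu).
    over.
  by apply: integralB_mean0; [exact: util_int | exact: theta_int | exact: theta_mean0].
move=> i vi bi vu bu.
by rewrite !expected_util_eq //; apply: BNIC.
Qed.
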